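(* Every nonempty closed subspace of an $S^{\ast}$-well-filtered space is $S^{\ast}$-well-filtered.
   Context: All spaces are $T_0$. The specialization order of $X$ is given by $x\le y$ iff $x\in cl(\{y\})$; ${\uparrow}$ is taken with respect to it; a subset is saturated if it is an upper set in the specialization order. $K(X)$ denotes the set of all nonempty compact saturated subsets of $X$; a family in $K(X)$ is filtered if any two members contain a common member. $X$ is $S^{\ast}$-well-filtered if for every filtered family $\{K_i\mid i\in I\}\subseteq K(X)$, every $G\in K(X)$ and every nonempty open $U$, $\bigcap_{i\in I}K_i\cap G\subseteq U$ implies $K_i\cap G\subseteq U$ for some $i$. *)

From Stdlib Require Import List.
Set Implicit Arguments.

Section Topo.
Variable X : Type.
Variable O : (X -> Prop) -> Prop.

Definition is_topology : Prop :=
  O (fun _ => True) /\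
  (forall U V, O U -> O V -> O (fun x => U x /\ V x)) /\
  (forall F : (X -> Prop) -> Prop, (forall U, F U -> O U) ->
     O (fun x => exists U, F U /\ U x)).

(* specialization order: x <= y iff x \in cl({y}) *)
Definition spec_le (x y : X) : Prop := forall U, O U -> U x -> U y.

Definition T0 : Prop := forall x y, spec_le x y -> spec_le y x -> x = y.

Definition closed (A : X -> Prop) : Prop := O (fun x => ~ A x).

Definition saturated (K : X -> Prop) : Prop :=
  forall x y, K x -> spec_le x y -> K y.

Definition compact (K : X -> Prop) : Prop :=
  forall F : (X -> Prop) -> Prop, (forall U, F U -> O U) ->
    (forall x, K x -> exists U, F U /\ U x) ->
    exists l : list (X -> Prop), (forall U, In U l -> F U) /\
      (forall x, K x -> exists U, In U l /\ U x).

Definition inKX (K : X -> Prop) : Prop :=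
  (exists x, K x) /\ compact K /\ saturated K.

Definition filtered (I : Type) (K : I -> X -> Prop) : Prop :=
  inhabited I /\
  forall i j, exists k, forall x, K k x -> K i x /\ K j x.

Definition S_star_wf : Prop :=
  forall (I : Type) (K : I -> X -> Prop),
    (forall i, inKX (K i)) -> filtered K ->
    forall G : X -> Prop, inKX G ->
    forall U : X -> Prop, O U -> (exists x, U x) ->
    (forall x, (forall i, K i x) -> G x -> U x) ->
    exists i, forall x, K i x -> G x -> U x.
End Topo.

Definition subspace_open (X : Type) (O : (X -> Prop) -> Prop) (A : X -> Prop)
  : ({x : X | A x} -> Prop) -> Prop :=
  fun V => exists U, O U /\ forall y : {x : X | A x}, V y <-> U (proj1_sig y).

(* The saturation in X of a compact saturated subset of the subspace A is compact
   saturated in X, and intersecting it with A gives back the original set.  So a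
   filtered family K_i and a set G in K(A) lift to their saturations in X.  An
   open set U of A is the trace of an open W of X, and W together with the
   complement of A is open in X (A is closed) and contains the intersection of
   the lifted sets; S*-well-filteredness of X yields an index i, and tracing back
   on A gives K_i and G inside U. *)
From Stdlib Require Import List Classical FunctionalExtensionality PropExtensionality.

Set Implicit Arguments.

Lemma list_choice (B C : Type) (R : B -> C -> Prop) (l : list B) :
  (forall b, In b l -> exists c, R b c) ->
  exists l' : list C, (forall c, In c l' -> exists b, In b l /\ R b c) /\
                      (forall b, In b l -> exists c, In c l' /\ R b c).
Proof.
  induction l as [|b0 l IH]; intros Hex.
  - exists nil. split; intros _ [].
  - destruct (Hex b0 (or_introl eq_refl)) as [c0 Hc0].
    destruct IH as [l' [Hl'1 Hl'2]].
    { intros b Hb. apply Hex. right. exact Hb. }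
    exists (c0 :: l'). split.
    + intros c [<- | Hc].
      * exists b0. split; [left; reflexivity | exact Hc0].
      * destruct (Hl'1 c Hc) as [b [Hb Rbc]]. exists b. split; [right; exact Hb | exact Rbc].
    + intros b [<- | Hb].
      * exists c0. split; [left; reflexivity | exact Hc0].
      * destruct (Hl'2 b Hb) as [c [Hc Rbc]]. exists c. split; [right; exact Hc | exact Rbc].
Qed.

Section Saturation.
Variable X : Type.
Variable O : (X -> Prop) -> Prop.

Lemma spec_le_refl (x : X) : spec_le O x x.
Proof. intros U _ Ux. exact Ux. Qed.

Lemma spec_le_trans (x y z : X) : spec_le O x y -> spec_le O y z -> spec_le O x z.
Proof. intros Hxy Hyz U HU Ux. apply Hyz, Hxy; assumption. Qed.

Definition up (K : X -> Prop) (x : X) : Prop := exists y, K y /\ spec_le O y x.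

Lemma up_mono (K L : X -> Prop) :
  (forall x, K x -> L x) -> forall x, up K x -> up L x.
Proof. intros HKL x [y [Ky Hyx]]. exists y. split; [apply HKL; exact Ky | exact Hyx]. Qed.

Lemma saturated_up (K : X -> Prop) : saturated O (up K).
Proof.
  intros x z [y [Ky Hyx]] Hxz. exists y. split; [exact Ky | exact (spec_le_trans Hyx Hxz)].
Qed.

Lemma compact_up (K : X -> Prop) : compact O K -> compact O (up K).
Proof.
  intros HK F HF Hcov.
  destruct (HK F HF) as [l [HlF Hlcov]].
  { intros x Kx. apply Hcov. exists x. split; [exact Kx | apply spec_le_refl]. }
  exists l. split; [exact HlF |].
  intros x [y [Ky Hyx]]. destruct (Hlcov y Ky) as [U [HUl Uy]].
  exists U. split; [exact HUl | exact (Hyx U (HF U (HlF U HUl)) Uy)].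
Qed.

Lemma inKX_up (K : X -> Prop) : (exists x, K x) -> compact O K -> inKX O (up K).
Proof.
  intros [x Kx] HK. split; [| split].
  - exists x. exists x. split; [exact Kx | apply spec_le_refl].
  - exact (compact_up HK).
  - apply saturated_up.
Qed.

Lemma open_union2 (U V : X -> Prop) :
  is_topology O -> O U -> O V -> O (fun x => U x \/ V x).
Proof.
  intros [_ [_ Hunion]] HU HV.
  replace (fun x => U x \/ V x) with (fun x => exists W, (W = U \/ W = V) /\ W x).
  - apply Hunion. intros W [-> | ->]; assumption.
  - apply functional_extensionality. intros x. apply propositional_extensionality.
    split.
    + intros [W [[-> | ->] Wx]]; [left | right]; exact Wx.
    + intros [Ux | Vx]; [exists U | exists V]; auto.
Qed.

End Saturation.

Section Subspace.
Variable X : Type.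
Variable O : (X -> Prop) -> Prop.
Variable A : X -> Prop.

Notation OA := (subspace_open O A).

Definition image (K : {x | A x} -> Prop) (x : X) : Prop :=
  exists y, K y /\ proj1_sig y = x.

Lemma image_mono (K L : {x | A x} -> Prop) :
  (forall y, K y -> L y) -> forall x, image K x -> image L x.
Proof. intros HKL x [y [Ky <-]]. exists y. split; [apply HKL; exact Ky | reflexivity]. Qed.

Lemma spec_le_subspace (y z : {x | A x}) :
  spec_le O (proj1_sig y) (proj1_sig z) -> spec_le OA y z.
Proof.
  intros Hyz V [U [HU HVU]] Vy. apply HVU, Hyz; [exact HU |]. apply HVU. exact Vy.
Qed.

(* Covers of [image K] in X trace to covers of K in A, and a finite
   subcover in A is lifted back member by member. *)
Lemma compact_image (K : {x | A x} -> Prop) : compact OA K -> compact O (image K).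
Proof.
  intros HK F HF Hcov.
  set (trace := fun (V : {x | A x} -> Prop) (W : X -> Prop) =>
                  F W /\ forall y, V y <-> W (proj1_sig y)).
  destruct (HK (fun V => exists W, trace V W)) as [lA [HlA HlAcov]].
  - intros V [W [HW HVW]]. exists W. split; [exact (HF W HW) | exact HVW].
  - intros y Ky. destruct (Hcov (proj1_sig y)) as [W [HW Wy]].
    { exists y. split; [exact Ky | reflexivity]. }
    exists (fun z => W (proj1_sig z)). split; [| exact Wy].
    exists W. split; [exact HW | tauto].
  - destruct (list_choice trace lA HlA) as [l [Hl Hlcov]].
    exists l. split.
    + intros W HW. destruct (Hl W HW) as [V [_ [HFW _]]]. exact HFW.
    + intros x [y [Ky <-]]. destruct (HlAcov y Ky) as [V [HV Vy]].
      destruct (Hlcov V HV) as [W [HW [_ HVW]]].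
      exists W. split; [exact HW | apply HVW; exact Vy].
Qed.

Lemma up_image_val (K : {x | A x} -> Prop) (y : {x | A x}) :
  K y -> up O (image K) (proj1_sig y).
Proof.
  intros Ky. exists (proj1_sig y). split; [exists y; split; auto | apply spec_le_refl].
Qed.

Lemma inKX_up_image (K : {x | A x} -> Prop) : inKX OA K -> inKX O (up O (image K)).
Proof.
  intros [[y Ky] [HK _]]. apply inKX_up.
  - exists (proj1_sig y). exists y. split; [exact Ky | reflexivity].
  - exact (compact_image HK).
Qed.

Lemma up_image_trace (K : {x | A x} -> Prop) :
  saturated OA K -> forall y, up O (image K) (proj1_sig y) -> K y.
Proof.
  intros HK y [x [[z [Kz <-]] Hzy]]. exact (HK z y Kz (spec_le_subspace z y Hzy)).
Qed.

End Subspace.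

Arguments up_image_val {X} O {A K y}.

Theorem mainTheorem14 (X : Type) (O : (X -> Prop) -> Prop) :
  is_topology O -> T0 O -> S_star_wf O ->
  forall A : X -> Prop, closed O A -> (exists x, A x) ->
  S_star_wf (subspace_open O A).
Proof.
  intros Htop _ Hwf A HA _ I K HK [Hinh Hfil] G HG V [W [HW HVW]] [v Vv] HKGV.
  set (lift := fun L : {x | A x} -> Prop => up O (@image X A L)).
  assert (Hfil' : filtered (fun i => lift (K i))).
  { split; [exact Hinh |]. intros i j. destruct (Hfil i j) as [k Hk]. exists k.
    intros x Hx. split; revert x Hx; apply up_mono, image_mono; intros y Ky; apply (Hk y Ky). }
  assert (Hopen : O (fun x => W x \/ ~ A x)) by exact (open_union2 W _ Htop HW HA).
  assert (Hne : exists x, W x \/ ~ A x).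
  { exists (proj1_sig v). left. apply HVW. exact Vv. }
  assert (Hcap : forall x, (forall i, lift (K i) x) -> lift G x -> W x \/ ~ A x).
  { intros x HKx HGx. destruct (classic (A x)) as [Ax | nAx]; [left | right; exact nAx].
    apply (HVW (exist A x Ax)), HKGV.
    - intros i. exact (up_image_trace (proj2 (proj2 (HK i))) (exist A x Ax) (HKx i)).
    - exact (up_image_trace (proj2 (proj2 HG)) (exist A x Ax) HGx). }
  destruct (Hwf I (fun i => lift (K i)) (fun i => inKX_up_image (HK i)) Hfil'
                (lift G) (inKX_up_image HG) _ Hopen Hne Hcap) as [i Hi].
  exists i. intros y Ky Gy. apply HVW.
  destruct (Hi (proj1_sig y) (up_image_val O Ky) (up_image_val O Gy)) as [Wy | nAy];
    [exact Wy | contradiction (proj2_sig y)].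
Qed.
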